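(* Let $G$ be a finite group with $|G|\equiv 3 \pmod 6$, $G'\cong C_5\times C_5$ and $G'\cap Z(G)=\{1\}$. Then (1) $|\mathrm{Cl}_G(x)|=3$ for all $x\in G'\setminus Z(G)$, and (2) $|G/C_G(G')|=3$.
   Context: $G'$ is the commutator subgroup, $Z(G)$ the center, $C_G(G')$ the centralizer of $G'$ in $G$, $\mathrm{Cl}_G(x)$ the conjugacy class of $x$, $C_5$ the cyclic group of order $5$. *)

From mathcomp Require Import all_boot all_fingroup all_solvable all_algebra.

(* Let V = G', elementary abelian of order 25 with V :&: Z(G) = 1, and G of odd
   order. Since |G| is coprime to |Aut C_5| = 4, an element g of G normalising a
   line <x> of V centralises x, so the class of x has the size of the G-orbit of
   <x> among the 6 lines of V. These orbits have odd size (dividing |G|) greater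
   than 1 (a fixed line would be central), so the 6 lines split as 3 + 3 and
   every nontrivial class in V has 3 elements. Finally C_G[x] contains G', hence
   is normal, so it also centralises a conjugate x^g spanning a second line;
   thus C_G(V) = C_G[x], of index 3. *)
From mathcomp Require Import all_boot all_fingroup all_solvable all_algebra.
From mathcomp Require Import zify.
Local Open Scope group_scope.

Lemma abelem_setX (gT1 gT2 : finGroupType) p (H1 : {group gT1}) (H2 : {group gT2}) :
  p.-abelem (setX H1 H2) = p.-abelem H1 && p.-abelem H2.
Proof.
rewrite (dprod_abelem _ (setX_dprod _ _)).
by rewrite -(isog_abelem (isog_setX1 _ H1)) -(isog_abelem (isog_set1X _ H2)).
Qed.

Lemma abelem_Zp_sq p : prime p -> p.-abelem [set: 'Z_p * 'Z_p].
Proof.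
move=> p_pr; have -> : [set: 'Z_p * 'Z_p] = setX [set: 'Z_p] [set: 'Z_p].
  by apply/setP => -[a b]; rewrite !inE.
by rewrite abelem_setX andbb prime_abelem // cardsT card_ord Zp_cast ?prime_gt1.
Qed.

Lemma partition_odd_card6 {T : finType} {P : {set {set T}}} {S : {set T}} :
    partition P S -> #|S| = 6 -> {in P, forall A : {set T}, odd #|A| && (1 < #|A|)} ->
  {in P, forall A : {set T}, #|A| = 3}.
Proof.
move=> partP cardS oddP A PA; have /andP [oddA gt1A] := oddP A PA.
have := card_partition partP; rewrite cardS (bigD1 A) //=.
have [B /andP [PB BA] | noB] := pickP [pred B in P | B != A].
  rewrite (bigD1 B) /=; last by rewrite PB.
  by have /andP [oddB gt1B] := oddP B PB; lia.
by rewrite big_pred0 // => /=; lia.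
Qed.

Section CoprimeCycle.

Variables (gT : finGroupType) (G : {group gT}) (x : gT).
Hypothesis coGx : coprime #|G| (totient #[x]).

(* The image of 'N_G(<[x]>) in Aut <[x]> has order dividing both #|G| and
   #|Aut <[x]>| = totient #[x]. *)
Lemma subnorm_cycle_coprime : 'N_G(<[x]>) = 'C_G[x].
Proof.
apply/eqP; rewrite eqEsubset [X in _ && X]setIS ?andbT; last first.
  by rewrite -cent_cycle cent_sub.
set N := 'N_G(<[x]>).
have dvd_G : #|conj_aut <[x]> @* N| %| #|G|.
  exact: dvdn_trans (dvdn_morphim _ _) (cardSg (subsetIl _ _)).
have dvd_Aut : #|conj_aut <[x]> @* N| %| totient #[x].
  by rewrite -card_Aut_cycle cardSg ?Aut_conj_aut.
have : N \subset 'ker (conj_aut <[x]>).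
  rewrite ker_trivg_morphim subsetIr /= (card1_trivg (_ : _ = 1%N)) //.
  by apply/eqP; rewrite -dvdn1 -(eqP coGx) dvdn_gcd dvd_G.
by rewrite ker_conj_aut cent_cycle subsetI subsetIl.
Qed.

Lemma card_class_orbitJG_cycle : #|x ^: G| = #|orbit 'JG G <[x]>%G|.
Proof. by rewrite -index_cent1 card_orbit astab1JG subnorm_cycle_coprime. Qed.

End CoprimeCycle.

Lemma acts_pnElemJG {gT : finGroupType} {G V : {group gT}} p n :
  G \subset 'N(V) -> [acts G, on 'E_p^n(V) | 'JG].
Proof.
move=> nVG; apply/actsP => g Gg L /=.
by rewrite -(pnElemJ g _ _ _ L) (normsP nVG g Gg).
Qed.

Section OddOrderLines.

Context {gT : finGroupType} {G V : {group gT}}.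
Hypotheses (oddG : odd #|G|) (nsVG : V <| G) (Ep2V : V \in 'E_5^2(V)).
Hypothesis tiVZ : V :&: 'Z(G) = 1.

Let sVG : V \subset G := normal_sub nsVG.
Let nVG : G \subset 'N(V) := normal_norm nsVG.
Let abelV : 5.-abelem V. Proof. by case/pnElemP: Ep2V. Qed.

Lemma coprime_totient_V x : x \in V^# -> coprime #|G| (totient #[x]).
Proof.
case/setD1P=> ntx Vx; rewrite (abelem_order_p abelV Vx ntx) totient_prime //.
by rewrite -[5.-1]/(2 ^ 2)%N coprime_pexpr // coprimen2.
Qed.

Lemma cycle_p1Elem_V x : x \in V^# -> <[x]>%G \in 'E_5^1(V).
Proof.
case/setD1P=> ntx Vx; rewrite p1ElemE // !inE cycle_subG Vx /=.
by rewrite -orderE (abelem_order_p abelV Vx ntx).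
Qed.

Lemma p1Elem_V_cycle L : L \in 'E_5^1(V) -> exists2 x, x \in V^# & L = <[x]>%G.
Proof.
move=> EpL; have [sLV _ oL] := pnElemPcard EpL.
have prL : prime #|L| by rewrite oL.
have [x defL] := cyclicP (prime_cyclic prL).
exists x; last exact: val_inj.
have Lx : x \in L by rewrite defL cycle_id.
by rewrite !inE (subsetP sLV) // andbT -cycle_eq1 -defL -cardG_gt1 oL.
Qed.

Lemma odd_nontrivial_orbit_p1Elem L :
  L \in 'E_5^1(V) -> odd #|orbit 'JG G L| && (1 < #|orbit 'JG G L|).
Proof.
move=> EpL; rewrite (dvdn_odd (dvdn_orbit _ _ _) oddG) /=.
have [x V1x ->] := p1Elem_V_cycle L EpL; have /setD1P [ntx Vx] := V1x.
rewrite -card_class_orbitJG_cycle ?coprime_totient_V // -index_cent1 indexg_gt1.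
apply: contra ntx => cGx; suff: x \in V :&: 'Z(G) by rewrite tiVZ inE.
by rewrite inE Vx inE (subsetP sVG) //= -sub_cent1 (subset_trans cGx) ?subsetIr.
Qed.

Lemma card_class_V x : x \in V^# -> #|x ^: G| = 3.
Proof.
move=> V1x; rewrite card_class_orbitJG_cycle ?coprime_totient_V //.
apply: (partition_odd_card6 (orbit_partition (acts_pnElemJG 5 1 nVG))).
- by rewrite (card_p1Elem_p2Elem Ep2V).
- by move=> _ /imsetP [L EpL ->]; apply: odd_nontrivial_orbit_p1Elem.
- by rewrite imset_f ?cycle_p1Elem_V.
Qed.

Hypothesis sG'V : G^`(1) \subset V.

(* A conjugate of x outside <[x]> spans V together with x, and is centralised
   by the normal subgroup 'C_G[x]. *)
Lemma subcent_V_cent1 x : x \in V^# -> 'C_G(V) = 'C_G[x].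
Proof.
move=> V1x; have /setD1P [ntx Vx] := V1x.
have nsCx : 'C_G[x] <| G.
  apply: sub_der1_normal (subsetIl _ _); apply: subset_trans sG'V _.
  by rewrite subsetI sVG sub_cent1 (subsetP (abelem_abelian abelV)).
have [y xGy yx] : exists2 y, y \in x ^: G & y != x.
  apply/exists_inP; rewrite -negb_forall_in; apply: contraTN isT => /forall_inP eqx.
  suff: #|x ^: G| <= 1 by rewrite card_class_V.
  by rewrite -(cards1 x) subset_leq_card //; apply/subsetP => y /eqx; rewrite inE.
case/imsetP: xGy yx => g Gg ->{y} xgx.
have Cxg : 'C_G[x ^ g] = 'C_G[x].
  by rewrite cent1J -{1}(conjGid Gg) -conjIg (normsP (normal_norm nsCx)).
have V1xg : x ^ g \in V^# by rewrite !inE conjg_eq1 ntx memJ_norm // (subsetP nVG).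
have neq_lines : <[x]>%G :!=: <[x ^ g]>%G.
  apply: contra xgx => /eqP /= eq_xxg.
  have : g \in 'N_G(<[x]>) by rewrite inE Gg; apply/normP; rewrite -cycleJ eq_xxg.
  rewrite subnorm_cycle_coprime ?coprime_totient_V // => /setIP [_ /cent1P cgx].
  by rewrite conjg_fix; apply/commgP.
have /dprodP [_ defV _ _] :=
  p2Elem_dprodP Ep2V (cycle_p1Elem_V x V1x) (cycle_p1Elem_V (x ^ g) V1xg) neq_lines.
by rewrite -defV centM !cent_cycle setIIr Cxg setIid.
Qed.

Lemma card_quotient_subcent_V : #|G / 'C_G(V)| = 3.
Proof.
have ntV : V :!=: 1 by rewrite -cardG_gt1 (card_pnElem Ep2V).
have [x Vx ntx] := trivgPn _ ntV; have V1x : x \in V^# by rewrite !inE ntx.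
rewrite card_quotient; last exact: normal_norm (norm_normalI (norms_cent nVG)).
by rewrite -(card_class_V x V1x) -index_cent1 -(subcent_V_cent1 x V1x).
Qed.

End OddOrderLines.

Theorem lemma4p2 (gT : finGroupType) (G : {group gT}) :
  #|G| = 3 %[mod 6] ->
  G^`(1) \isog [set: 'Z_5 * 'Z_5] ->
  G^`(1) :&: 'Z(G) = 1 ->
  (forall x, x \in G^`(1) :\: 'Z(G) -> #|x ^: G| = 3%N) /\
  #|G / 'C_G(G^`(1))| = 3%N.
Proof.
move=> modG isoG' tiG'Z.
have oddG : odd #|G| by move: modG => /=; lia.
have Ep2G' : (G^`(1))%G \in 'E_5^2(G^`(1)).
  apply/pnElemP; rewrite subxx (isog_abelem isoG') abelem_Zp_sq //.
  by rewrite (card_isog isoG') cardsT card_prod !card_ord.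
have nsG'G := der_normal 1 G.
split; last exact: card_quotient_subcent_V oddG nsG'G Ep2G' tiG'Z (subxx _).
move=> x /setDP [G'x notZx]; apply: (card_class_V oddG nsG'G Ep2G' tiG'Z).
by rewrite !inE G'x andbT; apply: contraNneq notZx => ->; apply: group1.
Qed.
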